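(* In the setting of the incomplete arithmetic HRE matrix $A_k$ (with $1\le k<n$), if $k=1$, or if $s_{\mathrm{MAX}}=s_{\mathrm{MIN}}$ and $\overline{\mathit{CI}}(C_k)<\frac{n-k}{k-1}$, then $A_k$ is invertible.
   Context: $C_k=[c_{ij}]_{i,j=1}^k$ is the upper-left $k\times k$ submatrix of an incomplete $n\times n$ pairwise comparison matrix (entries positive or unknown $?$, known entries reciprocal with unit diagonal). $s_i$ is the number of missing entries in row $i$ of $C_k$, $s_{\mathrm{MAX}}=\max_i s_i$, $s_{\mathrm{MIN}}=\min_i s_i$. $D_k=[d_{ij}]$ with $d_{ij}=c_{ij}$ if known, $0$ if $c_{ij}=?$. $A_k$ has diagonal entries $1$ and off-diagonal entries $-\frac{d_{ij}}{n-s_i-1}$. Harker's index: $\overline{\mathit{CI}}(C_k)=\frac{\rho(H)-k}{k-1}$ where $H$ has $h_{ii}=1+s_i$, $h_{ij}=0$ if $c_{ij}=?$, $h_{ij}=c_{ij}$ otherwise, and $\rho$ is the spectral radius. *)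

From HB Require Import structures.
From mathcomp Require Import all_boot all_order all_algebra.
From mathcomp Require Import complex.
Set Implicit Arguments. Unset Strict Implicit. Unset Printing Implicit Defensive.
Import Order.TTheory GRing.Theory Num.Theory.
Local Open Scope ring_scope.

Section Defs.
Variable R : rcfType.

(* An incomplete pairwise comparison matrix: [Some x] is a known entry x,
   [None] is a missing entry "?". *)
Definition incomplete_pcm (n : nat) (C : 'M[option R]_n) : Prop :=
  (forall i, C i i = Some 1) /\
  (forall i j x, C i j = Some x -> 0 < x /\ C j i = Some x^-1) /\
  (forall i j, C i j = None -> C j i = None).

Definition upper_left (n k : nat) (hk : (k <= n)%N) (C : 'M[option R]_n)
  : 'M[option R]_k :=
  \matrix_(i < k, j < k) C (widen_ord hk i) (widen_ord hk j).

Definition nmiss (k : nat) (C : 'M[option R]_k) (i : 'I_k) : nat :=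
  #|[set j | C i j == None]|.

Definition s_max (k : nat) (C : 'M[option R]_k) : nat :=
  \max_(i < k) nmiss C i.

(* the neutral element k is harmless: every s_i <= k - 1 < k *)
Definition s_min (k : nat) (C : 'M[option R]_k) : nat :=
  \big[minn/k]_(i < k) nmiss C i.

Definition dmx (k : nat) (C : 'M[option R]_k) : 'M[R]_k :=
  \matrix_(i, j) match C i j with Some x => x | None => 0 end.

Definition A_mx (n k : nat) (C : 'M[option R]_k) : 'M[R]_k :=
  \matrix_(i, j) if i == j then 1
                 else - dmx C i j / (n%:R - (nmiss C i)%:R - 1).

Definition harker_mx (k : nat) (C : 'M[option R]_k) : 'M[R]_k :=
  \matrix_(i, j) if i == j then 1 + (nmiss C i)%:R else dmx C i j.

(* complex eigenvalues (with multiplicity) of a real square matrix *)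
Definition eigenvalues_C (k : nat) (M : 'M[R]_k) : seq R[i] :=
  sval (closed_field_poly_normal
          (char_poly (map_mx (fun x : R => (x%:C)%C) M))).

Definition spectral_radius (k : nat) (M : 'M[R]_k) : R :=
  \big[Num.max/0]_(z <- eigenvalues_C M) Normc.normc z.

Definition harker_CI (k : nat) (C : 'M[option R]_k) : R :=
  (spectral_radius (harker_mx C) - k%:R) / (k%:R - 1).

End Defs.

(* If every row of C_k misses the same number s of entries, then
   (n - s - 1) A_k = n I - H, so a singular A_k makes n an eigenvalue of
   Harker's matrix H and hence n <= rho(H).  The hypothesis on the index
   says exactly rho(H) < n.  For k = 1, A_k is the 1 x 1 identity. *)
From HB Require Import structures.
From mathcomp Require Import all_boot all_order all_algebra.
From mathcomp Require Import complex.
From mathcomp Require Import ring.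
Import Order.TTheory GRing.Theory Num.Theory.
Local Open Scope ring_scope.

Section SpectralRadius.
Context {R : rcfType}.

Lemma normc_real (a : R) : Normc.normc (a%:C)%C = `|a|.
Proof. by rewrite /= expr0n addr0 sqrtr_sqr. Qed.

Lemma eigenvalue_le_spectral_radius k (M : 'M[R]_k) (a : R) :
  eigenvalue M a -> `|a| <= spectral_radius M.
Proof.
rewrite eigenvalue_root_char => rootMa.
have : root (char_poly (map_mx (real_complex R) M)) (a%:C)%C.
  by rewrite -map_char_poly rmorph_root.
rewrite /spectral_radius /eigenvalues_C; case: closed_field_poly_normal => r /= ->.
rewrite (monicP (char_poly_monic _)) scale1r root_prod_XsubC => a_in_r.
by rewrite -normc_real (le_bigmax_seq _ _ xpredT).
Qed.

End SpectralRadius.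

Section MissingEntries.
Context {R : rcfType} {k : nat} {C : 'M[option R]_k}.

Lemma s_min_le_nmiss i : (s_min C <= nmiss C i)%N.
Proof. by rewrite /s_min -minEnat; exact: (bigmin_le k i (nmiss C)). Qed.

Lemma nmiss_eq_s_max i : s_max C = s_min C -> nmiss C i = s_max C.
Proof.
move=> s_maxE; apply/eqP; rewrite eqn_leq leq_bigmax s_maxE.
exact: s_min_le_nmiss.
Qed.

Lemma nmiss_lt_size i : C i i != None -> (nmiss C i < k)%N.
Proof.
move=> Cii; have missing_offdiag : [set j | C i j == None] \subset [set~ i].
  by apply/subsetP => j; rewrite !inE; apply: contraTneq => eq_ji; subst j.
rewrite (leq_ltn_trans (subset_leq_card missing_offdiag)) //.
by rewrite cardsC1 card_ord prednK // (leq_ltn_trans _ (ltn_ord i)).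
Qed.

Lemma scale_A_mx (n s : nat) : (forall i, nmiss C i = s) ->
  n%:R - s%:R - 1 != 0 :> R ->
  (n%:R - s%:R - 1) *: A_mx n C = n%:R%:M - harker_mx C.
Proof.
move=> nmissE denom_neq0; apply/matrixP => i j; rewrite !mxE nmissE.
have [eq_ij|_] := eqVneq i j; first by subst j; rewrite mulr1 mulr1n; ring.
by rewrite mulr0n sub0r mulrCA divff ?mulr1.
Qed.

End MissingEntries.

Lemma eigenvalue_of_scale_notin_unitmx {F : fieldType} {m : nat}
    {M B : 'M[F]_m} {a c : F} :
  c *: B = a%:M - M -> B \notin unitmx -> eigenvalue M a.
Proof.
move=> BE; rewrite unitmxE unitfE negbK => /det0P [v v_neq0 vB0].
apply/eigenvalueP; exists v => //; apply/eqP.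
by rewrite -mul_mx_scalar eq_sym -subr_eq0 -mulmxBr -BE -scalemxAr vB0 scaler0.
Qed.

Lemma upper_left_diag (R : rcfType) n k (hk : (k <= n)%N)
    (C : 'M[option R]_n) i :
  incomplete_pcm C -> upper_left hk C i i = Some 1.
Proof. by case=> diagC _; rewrite mxE diagC. Qed.

Lemma harker_CI_lt_spectral_radius {R : rcfType} {n k : nat}
    {C : 'M[option R]_k} :
  (1 < k)%N -> harker_CI C < (n%:R - k%:R) / (k%:R - 1) ->
  spectral_radius (harker_mx C) < n%:R.
Proof.
move=> k_gt1; have k1_gt0 : 0 < k%:R - 1 :> R by rewrite subr_gt0 ltr1n.
by rewrite /harker_CI ltr_pM2r ?invr_gt0 // ltrBlDr subrK.
Qed.

Theorem mainTheorem7 (R : rcfType) (n k : nat) (C : 'M[option R]_n)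
  (hC : incomplete_pcm C) (hk1 : (1 <= k)%N) (hkn : (k < n)%N) :
  let Ck := upper_left (ltnW hkn) C in
  k = 1%N \/
  (s_max Ck = s_min Ck /\ harker_CI Ck < (n%:R - k%:R) / (k%:R - 1)) ->
  A_mx n Ck \in unitmx.
Proof.
move=> Ck; have [k1 _|k_neq1] := eqVneq k 1%N.
  move: hkn Ck; rewrite k1 => hkn Ck.
  by rewrite unitmxE unitfE det_mx11 mxE eqxx oner_neq0.
case=> [/eqP|[s_maxE CI_lt]]; first by rewrite (negbTE k_neq1).
have k_gt1 : (1 < k)%N by rewrite ltn_neqAle eq_sym k_neq1.
have i0 : 'I_k := Ordinal hk1.
have nmissE i : nmiss Ck i = s_max Ck := nmiss_eq_s_max i s_maxE.
have s_lt_k : (s_max Ck < k)%N.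
  by rewrite -(nmissE i0) nmiss_lt_size // upper_left_diag.
have denom_gt0 : 0 < n%:R - (s_max Ck)%:R - 1 :> R.
  by rewrite -addrA -opprD subr_gt0 natr1 ltr_nat (leq_ltn_trans s_lt_k).
have A_scaled := scale_A_mx n _ nmissE (lt0r_neq0 denom_gt0).
apply/negPn/negP => /(eigenvalue_of_scale_notin_unitmx A_scaled).
move=> /eigenvalue_le_spectral_radius; rewrite normr_nat leNgt.
by rewrite (harker_CI_lt_spectral_radius k_gt1 CI_lt).
Qed.
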